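(* Let $X$ be a finite $T_0$ topological space of dimension $n$, let $E$ be a $k$-module, let $p\in X$ and let $F=E\otimes_k k_{U_p}$. Then the augmented standard complex $$0\to C_nF\to\cdots\to C_1F\to C_0F\to F\to 0$$ is homotopically trivial (null-homotopic), where $C_iF=\bigoplus_{p_0<\dots<p_i} F_{p_0}\otimes_k k_{U_{p_i}}$.
   Context: $k$ is a commutative ring. A finite $T_0$ space $X$ is regarded as a poset with $x\le y$ iff $x$ lies in the closure of $y$; $U_x=\{y: y\ge x\}$ is the smallest open set containing $x$, and $\dim X$ is the maximal length $i$ of a chain $x_0<\dots<x_i$. Sheaves are sheaves of $k$-modules on $X$; for an open set $U$, $k_U$ denotes the constant sheaf $k$ extended by zero outside $U$; $F_x$ is the stalk at $x$, and $E\otimes_k F$ is the sheaf with stalks $E\otimes_k F_x$. For $x\le y$, $r_{xy}:F_x\to F_y$ are the restriction maps and $k_{U_y}\hookrightarrow k_{U_x}$ is the natural inclusion. The standard complex $C_\bullet F$ has $C_iF=\bigoplus_{p_0<\dots<p_i} F_{p_0}\otimes_k k_{U_{p_i}}$ (sum over chains of length $i$), with differential the alternating sum of face maps (omitting $p_0$ uses $r_{p_0p_1}$, omitting $p_i$ uses the inclusion $k_{U_{p_i}}\hookrightarrow k_{U_{p_{i-1}}}$, other faces are identities), and augmentation $C_0F=\bigoplus_x F_x\otimes_k k_{U_x}\to F$ the natural map. *)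

Set Warnings "-redundant-canonical-projection -notation-overridden -ambiguous-paths".
From HB Require Import structures.
From mathcomp Require Import all_boot all_order all_algebra.
Set Implicit Arguments. Unset Strict Implicit. Unset Printing Implicit Defensive.
Import Order.TTheory GRing.Theory.
Local Open Scope ring_scope.

Section DProd.
Variables (R : pzRingType) (I : finType) (M : I -> lmodType R).

Definition dprod := {dffun forall i : I, M i}.
HB.instance Definition _ := Choice.on dprod.

Definition dp_zero : dprod := [ffun i => 0].
Definition dp_opp (f : dprod) : dprod := [ffun i => - f i].
Definition dp_add (f g : dprod) : dprod := [ffun i => f i + g i].
Definition dp_scale (a : R) (f : dprod) : dprod := [ffun i => a *: f i].

Lemma dp_addA : associative dp_add.
Proof. by move=> f g h; apply/ffunP => i; rewrite !ffunE addrA. Qed.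
Lemma dp_addC : commutative dp_add.
Proof. by move=> f g; apply/ffunP => i; rewrite !ffunE addrC. Qed.
Lemma dp_add0 : left_id dp_zero dp_add.
Proof. by move=> f; apply/ffunP => i; rewrite !ffunE add0r. Qed.
Lemma dp_addN : left_inverse dp_zero dp_opp dp_add.
Proof. by move=> f; apply/ffunP => i; rewrite !ffunE addNr. Qed.

HB.instance Definition _ :=
  GRing.isZmodule.Build dprod dp_addA dp_addC dp_add0 dp_addN.

Lemma dp_scaleA a b (f : dprod) : dp_scale a (dp_scale b f) = dp_scale (a * b) f.
Proof. by apply/ffunP => i; rewrite !ffunE scalerA. Qed.
Lemma dp_scale1 : left_id 1 dp_scale.
Proof. by move=> f; apply/ffunP => i; rewrite !ffunE scale1r. Qed.
Lemma dp_scaleDr : right_distributive dp_scale +%R.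
Proof. by move=> a f g; apply/ffunP => i; rewrite !ffunE scalerDr. Qed.
Lemma dp_scaleDl (f : dprod) : {morph dp_scale^~ f : a b / a + b}.
Proof. by move=> a b; apply/ffunP => i; rewrite !ffunE scalerDl. Qed.

HB.instance Definition _ :=
  GRing.Zmodule_isLmodule.Build R dprod dp_scaleA dp_scale1 dp_scaleDr dp_scaleDl.
End DProd.

Definition zmod0 (R : pzRingType) : lmodType R :=
  [the lmodType R of dprod (fun v : void => match v with end : lmodType R)].

Lemma zmod0_eq0 (R : pzRingType) (v : zmod0 R) : v = 0.
Proof. by apply/ffunP => -[]. Qed.

(* Sheaves of k-modules on a finite T0 space X, viewed as a finite poset
   (x <= y iff x lies in the closure of y).  Such a sheaf is given by its
   stalks F_x and restriction maps r_xy : F_x -> F_y for x <= y, functorial.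
   (res x y is only meaningful when x <= y.) *)
Section Sheaves.
Local Unset Implicit Arguments.
Variables (R : comPzRingType) (d : Order.disp_t) (X : finPOrderType d).

Record sheaf := Sheaf {
  stalk : X -> lmodType R;
  res : forall x y : X, stalk x -> stalk y;
  res_lin : forall x y, linear (res x y);
  res_id : forall x v, res x x v = v;
  res_comp : forall x y z : X, (x <= y)%O -> (y <= z)%O ->
    forall v, res x z v = res y z (res x y v) }.

Record shom (F G : sheaf) := SHom {
  hmap : forall x, stalk F x -> stalk G x;
  hmap_lin : forall x, linear (hmap x);
  hmap_nat : forall x y : X, (x <= y)%O ->
    forall v, hmap y (res F x y v) = res G x y (hmap x v) }.
Arguments hmap {F G} s x.

(* The stalk at x of  M (x) k_U  (U open): M if x \in U, 0 otherwise. *)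
Definition ext0 (b : bool) (M : lmodType R) : lmodType R :=
  if b then M else zmod0 R.

Definition ext0_map (b b' : bool) (M N : lmodType R) (h : M -> N) :
    ext0 b M -> ext0 b' N :=
  match b, b' return ext0 b M -> ext0 b' N with
  | true, true => h
  | _, _ => fun _ => 0
  end.
Arguments ext0_map b b' {M N} h.

Definition ext0_out (b : bool) (M N : lmodType R) (h : M -> N) :
    ext0 b M -> N :=
  match b return ext0 b M -> N with
  | true => h
  | false => fun _ => 0
  end.
Arguments ext0_out b {M N} h.

(* Finite direct sum  \bigoplus_{j in J} M_j (x) k_{U_{q j}}  *)
Section DSum.
Variables (J : finType) (M : J -> lmodType R) (q : J -> X).

Definition dsum_stalk (x : X) : lmodType R :=
  [the lmodType R of dprod (fun j : J => ext0 (q j <= x)%O (M j))].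

Definition dsum_res (x y : X) (f : dsum_stalk x) : dsum_stalk y :=
  [ffun j => ext0_map (q j <= x)%O (q j <= y)%O id (f j)].

Lemma dsum_res_lin x y : linear (dsum_res x y).
Proof.
move=> a f g; apply/ffunP => j; rewrite !ffunE /=.
move: (f j) (g j); rewrite /ext0_map /ext0.
by case: (q j <= x)%O; case: (q j <= y)%O => //= u v; rewrite scaler0 addr0.
Qed.

Lemma dsum_res_id x v : dsum_res x x v = v.
Proof.
apply/ffunP => j; rewrite !ffunE /=; move: (v j); rewrite /ext0_map /ext0.
by case: (q j <= x)%O => //= u; rewrite [RHS]zmod0_eq0.
Qed.

Lemma dsum_res_comp x y z : (x <= y)%O -> (y <= z)%O ->
  forall v, dsum_res x z v = dsum_res y z (dsum_res x y v).
Proof.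
move=> xy yz v; apply/ffunP => j; rewrite !ffunE /=.
have qxy : (q j <= x)%O -> (q j <= y)%O by move=> h; exact: le_trans xy.
have qyz : (q j <= y)%O -> (q j <= z)%O by move=> h; exact: le_trans yz.
move: (v j) qxy qyz; rewrite /ext0_map /ext0.
case: (q j <= x)%O; case: (q j <= y)%O; case: (q j <= z)%O => //= u h1 h2;
  by [ have := h1 isT | have := h2 isT ].
Qed.

Definition dsum : sheaf :=
  Sheaf dsum_stalk dsum_res dsum_res_lin dsum_res_id dsum_res_comp.
End DSum.
Arguments dsum {J} M q.

Definition tensU (E : lmodType R) (p : X) : sheaf :=
  dsum (fun _ : unit => E) (fun _ => p).

Definition chain (i : nat) := {t : i.+1.-tuple X | sorted (fun a b => a < b)%O t}.
Definition chead i (c : chain i) : X := tnth (val c) ord0.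
Definition clast i (c : chain i) : X := tnth (val c) ord_max.
Arguments chead {i} c.
Arguments clast {i} c.

Definition dimX (n : nat) : Prop :=
  inhabited (chain n) /\ forall m, chain m -> (m <= n)%N.

Definition stdC (F : sheaf) (i : nat) : sheaf :=
  dsum (fun c : chain i => stalk F (chead c)) (@clast i).

Definition face_of i (c : chain i.+1) (j : nat) (c' : chain i) : bool :=
  (val c' : seq X) == take j (val c) ++ drop j.+1 (val c).
Arguments face_of {i} c j c'.

(* differential C_{i+1} F -> C_i F on stalks at x: alternating sum of faces;
   omitting p_0 uses r_{p_0 p_1}, the other faces are identities
   (written r_{p_0 p_0}) on the F_{p_0} factor, and the inclusions of the
   k_U factors are built into ext0_map. *)
Definition stdd (F : sheaf) (i : nat) (x : X) :
    stalk (stdC F i.+1) x -> stalk (stdC F i) x :=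
  fun f => [ffun c' : chain i =>
    \sum_(c : chain i.+1) \sum_(j < i.+2 | face_of c j c')
       ((-1) ^+ j : R) *:
       ext0_map (clast c <= x)%O (clast c' <= x)%O
         (res F (chead c) (chead c')) (f c)].

Definition stdeps (F : sheaf) (x : X) : stalk (stdC F 0) x -> stalk F x :=
  fun f => \sum_(c : chain 0)
    ext0_out (clast c <= x)%O (res F (chead c) x) (f c).

Definition aug (F : sheaf) (i : nat) : sheaf :=
  match i with 0 => F | i'.+1 => stdC F i' end.

Definition augd (F : sheaf) (i : nat) :
    forall x, stalk (aug F i.+1) x -> stalk (aug F i) x :=
  match i as n return forall x, stalk (aug F n.+1) x -> stalk (aug F n) x with
  | 0 => stdeps F
  | i'.+1 => stdd F i'
  end.

Definition aug_null_homotopic (F : sheaf) : Prop :=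
  exists h : forall i, shom (aug F i) (aug F i.+1),
    (forall x v, augd F 0 x (hmap (h 0) x v) = v) /\
    (forall i x v,
       augd F i.+1 x (hmap (h i.+1) x v) + hmap (h i) x (augd F i x v) = v).

End Sheaves.
Arguments dimX {d} X n.
Arguments tensU {R d X} E p.
Arguments aug_null_homotopic {R d X} F.

(* Stalkwise, E (x) k_{U_p} is E on U_p and 0 elsewhere, so a section of C_i F
   over U_x is a family of vectors of E indexed by the chains p_0 < ... < p_i
   with p <= p_0 and p_i <= x.  The contracting homotopy is the cone on p: it
   puts g(p_1 < ... < p_{i+1}) on p < p_1 < ... < p_{i+1}, and 0 on the chains
   not starting at p (in degree -1 it puts v on the one-point chain p).  In
   d h g, the face omitting p returns the part of g on chains starting strictly
   above p and the other faces give - h d of that part, while on the part of g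
   living on chains starting at p, h d is the identity; hence d h + h d = id.
   The cone does not move the last vertex, so it commutes with restrictions. *)

Set Warnings "-notation-overridden -ambiguous-paths -redundant-canonical-projection".
From Pilot Require Import Defs.
From HB Require Import structures.
From mathcomp Require Import all_boot all_order all_algebra.
Set Implicit Arguments. Unset Strict Implicit. Unset Printing Implicit Defensive.
Import Order.TTheory GRing.Theory.
Local Open Scope ring_scope.

Section Chains.
Variables (d : Order.disp_t) (X : finPOrderType d).
Local Notation chain := (chain d X).
Local Notation chead := (chead d X _).
Local Notation clast := (clast d X _).
Local Notation face_of := (face_of d X _).

Definition cseq i (c : chain i) : seq X := val c.

Lemma cseq_inj i : injective (@cseq i).
Proof. by move=> c c' /val_inj/val_inj. Qed.

Lemma cseq_sorted i (c : chain i) : sorted (fun a b => a < b)%O (cseq c).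
Proof. exact: valP c. Qed.

Lemma size_cseq i (c : chain i) : size (cseq c) = i.+1.
Proof. exact: size_tuple. Qed.

Lemma cseq_head i (c : chain i) : cseq c = chead c :: behead (cseq c).
Proof. by case: c => [[[|x s] ?] ?]. Qed.

Lemma chead_nth i (c : chain i) x0 : chead c = nth x0 (cseq c) 0.
Proof. exact: tnth_nth. Qed.

Lemma clast_nth i (c : chain i) x0 : clast c = nth x0 (cseq c) i.
Proof. exact: tnth_nth. Qed.

Lemma behead_chain_sorted i (c : chain i.+1) :
  sorted (fun a b => a < b)%O (behead_tuple (val c)).
Proof. by have := cseq_sorted c; rewrite cseq_head => /path_sorted. Qed.

Definition ctail i (c : chain i.+1) : chain i :=
  exist _ (behead_tuple (val c)) (behead_chain_sorted c).

Lemma cseq_tail i (c : chain i.+1) : cseq c = chead c :: cseq (ctail c).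
Proof. exact: cseq_head. Qed.

Lemma clast_tail i (c : chain i.+1) : clast (ctail c) = clast c.
Proof. by rewrite !(clast_nth _ (chead c)) (cseq_tail c). Qed.

Lemma chead_lt_tail i (c : chain i.+1) : (chead c < chead (ctail c))%O.
Proof.
by have := cseq_sorted c; rewrite (cseq_tail c) (cseq_head (ctail c)) /= => /andP[].
Qed.

Lemma chain_head_tail_inj i (c c' : chain i.+1) :
  chead c = chead c' -> ctail c = ctail c' -> c = c'.
Proof. by move=> eh et; apply: cseq_inj; rewrite !cseq_tail eh et. Qed.

Lemma cseq0 (c : chain 0) : cseq c = [:: chead c].
Proof. by rewrite cseq_head; case: c => [[[|x [|y s]] ?] ?]. Qed.

Lemma clast0 (c : chain 0) : clast c = chead c.
Proof. by rewrite (clast_nth _ (chead c)) cseq0. Qed.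

Lemma chead0_inj : injective (@Defs.chead d X 0).
Proof. by move=> c c' e; apply: cseq_inj; rewrite !cseq0 e. Qed.

Lemma mem_chain_bounds i (c : chain i) y : y \in cseq c ->
  (chead c <= y)%O && (y <= clast c)%O.
Proof.
move=> yc; have le_sorted : sorted (fun a b => a <= b)%O (cseq c).
  by apply: sub_sorted (cseq_sorted c) => a b /ltW.
have le_nth := sorted_leq_nth le_trans (@lexx _ X) y le_sorted.
have iy : (index y (cseq c) < i.+1)%N by rewrite -(size_cseq c) index_mem.
have e := nth_index y yc.
rewrite (chead_nth _ y) (clast_nth _ y); apply/andP; split.
  by rewrite -[X in (_ <= X)%O]e le_nth ?inE ?size_cseq.
by rewrite -[X in (X <= _)%O]e le_nth ?inE ?size_cseq.
Qed.

Lemma mem_face i (c : chain i.+1) j (c' : chain i) y :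
  face_of c j c' -> y \in cseq c' -> y \in cseq c.
Proof.
by move/eqP; rewrite /cseq => ->; rewrite mem_cat => /orP[/mem_take|/mem_drop].
Qed.

Lemma face_chead i (c : chain i.+1) j (c' : chain i) :
  face_of c j c' -> (chead c <= chead c')%O.
Proof.
move=> f; have : chead c' \in cseq c by rewrite (mem_face f) // cseq_head mem_head.
by case/mem_chain_bounds/andP.
Qed.

Lemma face_clast i (c : chain i.+1) j (c' : chain i) :
  face_of c j c' -> (clast c' <= clast c)%O.
Proof.
move=> f; have : clast c' \in cseq c.
  by rewrite (mem_face f) // (clast_nth _ (clast c')) mem_nth // size_cseq.
by case/mem_chain_bounds/andP.
Qed.

Lemma face0E i (c : chain i.+1) (c' : chain i) : face_of c 0 c' = (c' == ctail c).
Proof.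
rewrite /Defs.face_of take0 drop1 /=.
by apply/eqP/eqP => [e|->] //; apply: cseq_inj; exact: e.
Qed.

Lemma faceSE i (c : chain i.+2) j (c' : chain i.+1) :
  face_of c j.+1 c' = (chead c' == chead c) && face_of (ctail c) j (ctail c').
Proof.
rewrite /Defs.face_of -!/(cseq _) -/(cseq (ctail c)) -/(cseq (ctail c')).
by rewrite (cseq_tail c) (cseq_tail c') /= eqseq_cons.
Qed.

Lemma face_chead_eq i (c : chain i.+1) j (c' : chain i) :
  face_of c j.+1 c' -> chead c' = chead c.
Proof.
rewrite /Defs.face_of -!/(cseq _) (cseq_tail c) (cseq_head c') /=.
by move/eqP => [].
Qed.

Lemma face1E (c : chain 1) (c' : chain 0) : face_of c 1 c' = (chead c' == chead c).
Proof.
rewrite /Defs.face_of -!/(cseq _) (cseq_tail c) cseq0 (cseq0 (ctail c)) /=.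
by rewrite eqseq_cons andbT.
Qed.

Section Cons.
Variable p : X.

Definition chain_pt : chain 0 := exist _ [tuple p] isT.

Lemma cons_chain_sorted m (c : chain m) : (p < chead c)%O ->
  sorted (fun a b => a < b)%O (cons_tuple p (val c)).
Proof.
move=> ltp; have := cseq_sorted c.
by rewrite /= -/(cseq c) (cseq_head c) /= ltp.
Qed.

Lemma sum_chain_cons (V : nmodType) m (c1 : chain m) (v : V) :
  \sum_(c : chain m.+1 | (chead c == p) && (ctail c == c1)) v =
  if (p < chead c1)%O then v else 0.
Proof.
case: ifPn => [ltp|Nltp]; last first.
  apply: big1 => c /andP[/eqP hp /eqP ht].
  by move: Nltp; rewrite -hp -ht chead_lt_tail.
pose c0 : chain m.+1 := exist _ (cons_tuple p (val c1)) (cons_chain_sorted ltp).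
rewrite (eq_bigl (pred1 c0)) ?big_pred1_eq // => c /=.
apply/andP/eqP => [[/eqP hp /eqP ht]|->]; last by split; apply/eqP; [|apply: cseq_inj].
by apply: cseq_inj; rewrite (cseq_tail c) hp ht.
Qed.

Lemma sum_chain_head (V : nmodType) m (G : chain m -> V) :
  \sum_(c : chain m.+1 | chead c == p) G (ctail c) =
  \sum_(c1 : chain m | (p < chead c1)%O) G c1.
Proof.
rewrite (partition_big (@ctail m) predT) //= [RHS]big_mkcond /=.
apply: eq_bigr => c1 _; rewrite -sum_chain_cons.
by apply: eq_bigr => c /andP[_ /eqP ->].
Qed.
End Cons.
End Chains.

Section Cone.
Variables (d : Order.disp_t) (X : finPOrderType d) (R : pzRingType) (V : lmodType R).
Variable p : X.
Local Notation chain := (chain d X).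
Local Notation chead := (chead d X _).
Local Notation face_of := (face_of d X _).

Definition chain_bd m (g : chain m.+1 -> V) (c' : chain m) : V :=
  \sum_(c : chain m.+1) \sum_(j < m.+2 | face_of c j c') ((-1) ^+ j : R) *: g c.

Definition augment (g : chain 0 -> V) : V := \sum_c g c.

Definition cone m (g : chain m -> V) (c : chain m.+1) : V :=
  if chead c == p then g (ctail c) else 0.

Definition cone0 (v : V) (c : chain 0) : V := if chead c == p then v else 0.

Definition part_gt m (g : chain m -> V) (c : chain m) : V :=
  if (p < chead c)%O then g c else 0.

Definition part_at m (g : chain m -> V) (c : chain m) : V :=
  if chead c == p then g c else 0.

Lemma part_gt_at m (g : chain m -> V) :
  (forall c, ~~ (p <= chead c)%O -> g c = 0) -> g =1 part_gt g \+ part_at g.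
Proof.
move=> g_above c; rewrite /part_gt /part_at /=.
case: eqP => [-> | ne_p]; first by rewrite ltxx add0r.
rewrite addr0; case: ifPn => // Nlt; apply: g_above.
by rewrite le_eqVlt negb_or Nlt andbT eq_sym; apply/eqP.
Qed.

Lemma eq_chain_bd m (g g' : chain m.+1 -> V) : g =1 g' -> chain_bd g =1 chain_bd g'.
Proof. by move=> e c'; apply: eq_bigr => c _; apply: eq_bigr => j _; rewrite e. Qed.

Lemma eq_augment (g g' : chain 0 -> V) : g =1 g' -> augment g = augment g'.
Proof. by move=> e; apply: eq_bigr => c _. Qed.

Lemma eq_cone m (g g' : chain m -> V) : g =1 g' -> cone g =1 cone g'.
Proof. by move=> e c; rewrite /cone e. Qed.

Lemma chain_bdD m (g g' : chain m.+1 -> V) c' :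
  chain_bd (g \+ g') c' = chain_bd g c' + chain_bd g' c'.
Proof.
rewrite -big_split; apply: eq_bigr => c _; rewrite -big_split.
by apply: eq_bigr => j _; rewrite scalerDr.
Qed.

Lemma chain_bd_cone_split m (g : chain m -> V) (c' : chain m) :
  chain_bd (cone g) c' = part_gt g c' -
    \sum_(c : chain m.+1 | chead c == p)
       \sum_(j < m.+1 | face_of c j.+1 c') ((-1) ^+ j : R) *: g (ctail c).
Proof.
rewrite /chain_bd; under eq_bigr => c _ do rewrite big_mkcond big_ord_recl /=.
rewrite big_split /=; congr (_ + _).
  rewrite /part_gt -(sum_chain_cons p c' (g c')) [RHS]big_mkcond.
  apply: eq_bigr => c _; rewrite face0E expr0 scale1r /cone eq_sym.
  by case: eqP => [<-|_]; rewrite ?andbT ?andbF.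
rewrite -sumrN [RHS]big_mkcond; apply: eq_bigr => c _ /=; rewrite /cone.
case: (chead c == p); last by rewrite big1 // => j _; case: ifP; rewrite ?scaler0.
rewrite -sumrN [RHS]big_mkcond; apply: eq_bigr => j _.
by rewrite exprS mulN1r scaleNr; case: ifP; rewrite ?oppr0.
Qed.

Lemma chain_bd_cone m (g : chain m.+1 -> V) (c' : chain m.+1) :
  chain_bd (cone g) c' = part_gt g c' - cone (chain_bd (part_gt g)) c'.
Proof.
rewrite chain_bd_cone_split /cone; congr (_ - _); case: eqP => [hc' | hc']; last first.
  apply: big1 => c /eqP hc; apply: big1 => j.
  by rewrite faceSE hc => /andP[/eqP /hc'].
transitivity (\sum_(c1 : chain m.+1 | (p < chead c1)%O)
    \sum_(j < m.+2 | face_of c1 j (ctail c')) ((-1) ^+ j : R) *: g c1).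
  rewrite -sum_chain_head; apply: eq_bigr => c /eqP hc; apply: eq_bigl => j.
  by rewrite faceSE hc hc' eqxx.
rewrite [LHS]big_mkcond; apply: eq_bigr => c1 _; rewrite /part_gt.
by case: (p < chead c1)%O; rewrite // big1 // => j _; rewrite scaler0.
Qed.

Lemma chain_bd_cone0 (g : chain 0 -> V) (c' : chain 0) :
  chain_bd (cone g) c' = part_gt g c' - cone0 (augment (part_gt g)) c'.
Proof.
rewrite chain_bd_cone_split /cone0 /augment; congr (_ - _).
under eq_bigr => c _ do rewrite big_mkcond big_ord1 /= face1E expr0 scale1r.
case: eqP => [hc' | hc']; last first.
  by apply: big1 => c /eqP hc; rewrite hc; case: eqP.
rewrite (eq_bigr (fun c => g (ctail c))); last first.
  by move=> c /eqP hc; rewrite hc hc' eqxx.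
by rewrite sum_chain_head big_mkcond.
Qed.

Lemma cone_chain_bd_at m (g : chain m.+1 -> V) :
  (forall c, chead c != p -> g c = 0) -> cone (chain_bd g) =1 g.
Proof.
move=> g_at c'; rewrite /cone /chain_bd.
case: eqP => [hc' | /eqP hc']; last by rewrite g_at.
have no_later_face c j : face_of c j.+1 (ctail c') -> chead c != p.
  move/face_chead_eq <-; rewrite -hc'; apply: contraTneq (chead_lt_tail c') => ->.
  by rewrite ltxx.
rewrite (bigD1 c') //= [X in _ + X]big1 ?addr0 => [|c1 ne_c1].
  rewrite big_mkcond big_ord_recl /= face0E eqxx expr0 scale1r big1 ?addr0 // => j _.
  by case: ifP => // /no_later_face; rewrite hc' eqxx.
apply: big1 => -[[|j] lt_j] /= f; last by rewrite g_at ?scaler0 // (no_later_face _ _ f).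
rewrite g_at ?scaler0 //; apply: contra ne_c1 => /eqP hc1.
by apply/eqP/chain_head_tail_inj; [rewrite hc1 | apply/esym/eqP; rewrite -face0E].
Qed.

Lemma cone0_augment_at (g : chain 0 -> V) :
  (forall c, chead c != p -> g c = 0) -> cone0 (augment g) =1 g.
Proof.
move=> g_at c'; rewrite /cone0 /augment.
case: eqP => [hc' | /eqP hc']; last by rewrite g_at.
rewrite (bigD1 c') //= big1 ?addr0 // => c ne_c; apply: g_at.
by apply: contra ne_c => /eqP hc; apply/eqP/chead0_inj; rewrite hc hc'.
Qed.

Lemma augment_cone0 v : augment (cone0 v) = v.
Proof.
rewrite /augment /cone0 -big_mkcond (big_pred1 (chain_pt p)) // => c /=.
by apply/eqP/eqP => [hc | -> //]; apply: chead0_inj.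
Qed.

Lemma cone_homotopy m (g : chain m.+1 -> V) :
  (forall c, ~~ (p <= chead c)%O -> g c = 0) ->
  forall c', chain_bd (cone g) c' + cone (chain_bd g) c' = g c'.
Proof.
move=> g_above c'.
have -> : cone (chain_bd g) c' =
    cone (chain_bd (part_gt g)) c' + cone (chain_bd (part_at g)) c'.
  rewrite /cone; case: ifP; rewrite ?addr0 // -chain_bdD.
  by move=> _; apply: eq_chain_bd; apply: part_gt_at.
rewrite chain_bd_cone (cone_chain_bd_at (g := part_at g)) => [|c].
  by rewrite addrA subrK [RHS](part_gt_at g_above).
by rewrite /part_at => /negbTE ->.
Qed.

Lemma cone0_homotopy (g : chain 0 -> V) :
  (forall c, ~~ (p <= chead c)%O -> g c = 0) ->
  forall c', chain_bd (cone g) c' + cone0 (augment g) c' = g c'.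
Proof.
move=> g_above c'.
have -> : cone0 (augment g) c' =
    cone0 (augment (part_gt g)) c' + cone0 (augment (part_at g)) c'.
  rewrite /cone0; case: ifP; rewrite ?addr0 // /augment -big_split.
  by move=> _; apply: eq_bigr => c _; apply: part_gt_at.
rewrite chain_bd_cone0 (cone0_augment_at (g := part_at g)) => [|c].
  by rewrite addrA subrK [RHS](part_gt_at g_above).
by rewrite /part_at => /negbTE ->.
Qed.
End Cone.

Section Ext0.
Variable R : comPzRingType.

Definition ext0_val b (M : lmodType R) : ext0 R b M -> M := ext0_out R b M M id.
Definition ext0_of b (M : lmodType R) : M -> ext0 R b M := ext0_map R true b M M id.

Lemma ext0_val_linear b M : linear (@ext0_val b M).
Proof. by case: b => //= a u v; rewrite scaler0 addr0. Qed.
HB.instance Definition _ b M :=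
  GRing.isLinear.Build R (ext0 R b M) M _ (@ext0_val b M) (@ext0_val_linear b M).

Lemma ext0_valK b M (w : ext0 R b M) : ext0_of b (ext0_val w) = w.
Proof. by case: b w => //= w; symmetry; apply: zmod0_eq0. Qed.

Lemma ext0_val_inj b M : injective (@ext0_val b M).
Proof. exact: can_inj (@ext0_valK b M). Qed.

Lemma ext0_val_of b (M : lmodType R) (m : M) :
  ext0_val (ext0_of b m) = if b then m else 0.
Proof. by case: b. Qed.

Lemma ext0_val_map b b' (M N : lmodType R) (h : M -> N) (w : ext0 R b M) : h 0 = 0 ->
  ext0_val (ext0_map R b b' M N h w) = if b' then h (ext0_val w) else 0.
Proof. by case: b b' w => [] [] //= w ->. Qed.

Lemma ext0_outE b (M N : lmodType R) (h : M -> N) (w : ext0 R b M) :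
  ext0_out R b M N h w = if b then h (ext0_val w) else 0.
Proof. by case: b w. Qed.
End Ext0.

HB.instance Definition _ (R : comPzRingType) d X (F : sheaf R d X) x y :=
  GRing.isLinear.Build R (stalk R d X F x) (stalk R d X F y) _ (res R d X F x y)
    (res_lin R d X F x y).

Section DsumCoord.
Variables (R : comPzRingType) (d : Order.disp_t) (X : finPOrderType d).
Variables (J : finType) (M : J -> lmodType R) (q : J -> X).
Local Notation S := (dsum R d X J M q).
Local Notation stalk := (stalk R d X S).

Definition dsum_coord (j : J) (x : X) (f : stalk x) : M j :=
  ext0_val ((f : dprod (fun j => ext0 R (q j <= x)%O (M j))) j).

Lemma dsum_coord_linear j x : linear (@dsum_coord j x).
Proof. by move=> a f g; rewrite /dsum_coord !ffunE linearP. Qed.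
HB.instance Definition _ j x :=
  GRing.isLinear.Build R (stalk x) (M j) _ (@dsum_coord j x) (@dsum_coord_linear j x).

Lemma dsum_coord_inj x (f g : stalk x) :
  (forall j, dsum_coord j f = dsum_coord j g) -> f = g.
Proof. by move=> e; apply/ffunP => j; apply: ext0_val_inj; apply: e. Qed.

Lemma dsum_coord_out j x (f : stalk x) : ~~ (q j <= x)%O -> dsum_coord j f = 0.
Proof. by rewrite /dsum_coord; case: (q j <= x)%O (f j). Qed.

Lemma dsum_coord_res j x y (f : stalk x) :
  dsum_coord j (res R d X S x y f) = if (q j <= y)%O then dsum_coord j f else 0.
Proof. by rewrite /dsum_coord /= /dsum_res ffunE ext0_val_map. Qed.

Definition dsum_of x (g : forall j, M j) : stalk x :=
  [ffun j => ext0_of (q j <= x)%O (g j)].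

Lemma dsum_coord_of j x g :
  dsum_coord j (dsum_of x g) = if (q j <= x)%O then g j else 0.
Proof. by rewrite /dsum_coord ffunE ext0_val_of. Qed.
End DsumCoord.

Section StandardComplex.
Variables (R : comPzRingType) (d : Order.disp_t) (X : finPOrderType d).
Variables (E : lmodType R) (p : X).
Local Notation F := (tensU E p).
Local Notation chain := (chain d X).
Local Notation chead := (chead d X _).
Local Notation clast := (clast d X _).
Local Notation stalk := (stalk R d X).
Local Notation C := (stdC R d X F).

Definition std_coord i x (f : stalk (C i) x) (c : chain i) : E :=
  dsum_coord tt (dsum_coord c f).

Definition std_of i x (g : chain i -> E) : stalk (C i) x :=
  dsum_of (@Defs.clast d X i) x (fun c => dsum_of (fun=> p) (chead c) (fun=> g c)).

Lemma std_coord_inj i x (f f' : stalk (C i) x) :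
  std_coord f =1 std_coord f' -> f = f'.
Proof.
by move=> e; apply: dsum_coord_inj => c; apply: dsum_coord_inj => -[]; apply: e.
Qed.

Lemma std_coordD i x (f f' : stalk (C i) x) c :
  std_coord (f + f') c = std_coord f c + std_coord f' c.
Proof. by rewrite /std_coord !raddfD. Qed.

Lemma std_coordP i x a (f f' : stalk (C i) x) c :
  std_coord (a *: f + f') c = a *: std_coord f c + std_coord f' c.
Proof. by rewrite /std_coord !linearP. Qed.

Lemma std_coord_out i x (f : stalk (C i) x) c :
  ~~ ((clast c <= x) && (p <= chead c))%O -> std_coord f c = 0.
Proof.
rewrite negb_and => /orP[Nl | Np]; rewrite /std_coord; last exact: dsum_coord_out.
by rewrite (dsum_coord_out _ Nl) raddf0.
Qed.

Lemma std_coord_above i x (f : stalk (C i) x) c :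
  ~~ (p <= chead c)%O -> std_coord f c = 0.
Proof. by move=> Np; apply: std_coord_out; rewrite negb_and Np orbT. Qed.

Lemma std_coord_res i x y (f : stalk (C i) x) c :
  std_coord (res R d X (C i) x y f) c = if (clast c <= y)%O then std_coord f c else 0.
Proof. by rewrite /std_coord dsum_coord_res; case: ifP; rewrite ?raddf0. Qed.

Lemma std_coord_of i x (g : chain i -> E) c :
  std_coord (std_of x g) c = if ((clast c <= x) && (p <= chead c))%O then g c else 0.
Proof. by rewrite /std_coord dsum_coord_of; case: ifP; rewrite ?dsum_coord_of ?raddf0. Qed.

Lemma std_coord_stdd i x (f : stalk (C i.+1) x) c' :
  std_coord (stdd R d X F i x f) c' = chain_bd (std_coord f) c'.
Proof.
rewrite /std_coord {2}/dsum_coord ffunE !linear_sum; apply: eq_bigr => c _.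
rewrite !linear_sum; apply: eq_bigr => j face_j; rewrite !linearZ; congr (_ *: _).
rewrite /= ext0_val_map; last exact: raddf0 (res R d X F (chead c) (chead c')).
case: ifP => [lx' | Nlx'].
  rewrite dsum_coord_res -/(std_coord f c); case: ifP => // Np.
  rewrite std_coord_above //; apply: contraFN Np => hp.
  exact: le_trans hp (face_chead face_j).
rewrite raddf0; apply/esym/std_coord_out; apply: contraFN Nlx' => /andP[lx _].
exact: le_trans (face_clast face_j) lx.
Qed.

Lemma dsum_coord_stdeps x (f : stalk (C 0) x) :
  dsum_coord tt (stdeps R d X F x f) = augment (std_coord f).
Proof.
rewrite /stdeps raddf_sum; apply: eq_bigr => c _ /=; rewrite ext0_outE.
case: ifP => [lx | Nlx]; last by rewrite raddf0 std_coord_out // Nlx.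
rewrite dsum_coord_res -/(std_coord f c); case: ifP => // Np.
by rewrite std_coord_above //; apply: contraFN Np => /le_trans; apply; rewrite -clast0.
Qed.

Definition cone_std i x (f : stalk (C i) x) : stalk (C i.+1) x :=
  std_of x (cone p (std_coord f)).

Lemma std_coord_cone_std i x (f : stalk (C i) x) :
  std_coord (cone_std f) =1 cone p (std_coord f).
Proof.
move=> c; rewrite std_coord_of /cone; case: eqP => [hc | _]; last by rewrite if_same.
rewrite hc lexx andbT; case: ifP => // Nl.
by rewrite std_coord_out // clast_tail Nl.
Qed.

Lemma cone_std_linear i x : linear (@cone_std i x).
Proof.
move=> a f f'; apply: std_coord_inj => c.
rewrite std_coordP !std_coord_cone_std /cone std_coordP.
by case: ifP; rewrite ?scaler0 ?addr0.
Qed.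

Lemma cone_std_natural i x y : (x <= y)%O -> forall f : stalk (C i) x,
  cone_std (res R d X (C i) x y f) = res R d X (C i.+1) x y (cone_std f).
Proof.
move=> _ f; apply: std_coord_inj => c.
rewrite std_coord_res !std_coord_cone_std /cone std_coord_res clast_tail.
by do 2 case: ifP.
Qed.

Definition cone_aug x (v : stalk F x) : stalk (C 0) x :=
  std_of x (cone0 p (dsum_coord tt v)).

Lemma std_coord_cone_aug x (v : stalk F x) :
  std_coord (cone_aug v) =1 cone0 p (dsum_coord tt v).
Proof.
move=> c; rewrite std_coord_of /cone0; case: eqP => [hc | _]; last by rewrite if_same.
rewrite hc lexx andbT clast0 hc; case: ifP => // Np.
by rewrite dsum_coord_out ?Np.
Qed.

Lemma cone_aug_linear x : linear (@cone_aug x).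
Proof.
move=> a v v'; apply: std_coord_inj => c.
rewrite std_coordP !std_coord_cone_aug /cone0 linearP.
by case: ifP; rewrite ?scaler0 ?addr0.
Qed.

Lemma cone_aug_natural x y : (x <= y)%O -> forall v : stalk F x,
  cone_aug (res R d X F x y v) = res R d X (C 0) x y (cone_aug v).
Proof.
move=> _ v; apply: std_coord_inj => c.
rewrite std_coord_res !std_coord_cone_aug /cone0 dsum_coord_res clast0.
by case: eqP => [-> | _]; rewrite ?if_same.
Qed.

Definition cone_hom i : shom R d X (aug R d X F i) (aug R d X F i.+1) :=
  match i with
  | 0 => SHom R d X F (C 0) cone_aug cone_aug_linear cone_aug_natural
  | i.+1 => SHom R d X (C i) (C i.+1) (@cone_std i) (@cone_std_linear i)
              (@cone_std_natural i)
  end.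
End StandardComplex.

Theorem proposition1p4 (k : comPzRingType) (d : Order.disp_t)
  (X : finPOrderType d) (n : nat) (E : lmodType k) (p : X) :
  dimX X n ->
  aug_null_homotopic (tensU E p).
Proof.
move=> _; exists (cone_hom E p); split => [x v | [|i] x v] /=.
- apply: dsum_coord_inj => -[].
  by rewrite dsum_coord_stdeps (eq_augment (std_coord_cone_aug v)) augment_cone0.
- apply: std_coord_inj => c.
  rewrite std_coordD std_coord_stdd std_coord_cone_aug dsum_coord_stdeps.
  rewrite (eq_chain_bd (std_coord_cone_std v)) cone0_homotopy //.
  exact: std_coord_above.
- apply: std_coord_inj => c.
  rewrite std_coordD std_coord_stdd (eq_chain_bd (std_coord_cone_std v)).
  rewrite std_coord_cone_std (eq_cone _ (std_coord_stdd v)) cone_homotopy //.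
  exact: std_coord_above.
Qed.
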